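(* Let $\mu>0$, $T_s>0$, $T_w>0$ and $\sigma_{\mathrm{off}}\in[0,1)$. Define for $\rho\in(0,1)$ the function $f(\rho)=\dfrac{e^{-\mu\rho T_s}}{\mu\rho}$ and let $b=T_s+T_w$. Then $f''(\rho)\bigl(f(\rho)+b\bigr)\ge 2\bigl(f'(\rho)\bigr)^2$ for all $\rho\in(0,1)$; consequently the function $E(\rho)=1-(1-\sigma_{\mathrm{off}})(1-\rho)\dfrac{f(\rho)}{f(\rho)+T_s+T_w}$ is concave on $(0,1)$.
   Context: This is the normalized energy consumption $E(\rho)$ of an Energy Efficient Ethernet link at normalized load $\rho$ under the ''frame transmission'' policy with Poisson packet arrivals, where $f(\rho)$ is the mean time spent in the low-power state, $\mu^{-1}$ the mean packet transmission time, $T_s$, $T_w$ the sleep and wake transition times, and $\sigma_{\mathrm{off}}$ the relative power in the idle state. *)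

From Stdlib Require Import Reals.
From Coquelicot Require Import Coquelicot.
Open Scope R_scope.

(* Mean time spent in the low-power state: f(rho) = exp(-mu rho Ts)/(mu rho). *)
Definition eee_f (mu Ts : R) (rho : R) : R := exp (- mu * rho * Ts) / (mu * rho).

Definition eee_E (mu Ts Tw soff : R) (rho : R) : R :=
  1 - (1 - soff) * (1 - rho) * (eee_f mu Ts rho / (eee_f mu Ts rho + Ts + Tw)).

Definition concave_on_open (a b : R) (g : R -> R) : Prop :=
  forall x y t, a < x < b -> a < y < b -> 0 <= t <= 1 ->
    t * g x + (1 - t) * g y <= g (t * x + (1 - t) * y).

(** Writing [a = mu Ts rho], one computes
    [f'' (f + b) - 2 f'^2 = e^{-a} (b mu rho (a^2 + 2a + 2) - e^{-a} a (a + 2)) / (mu^2 rho^4)],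
    which is nonnegative because [b mu rho >= a] and [e^{-a} <= 1].  For the energy,
    [E = 1 - (1 - soff) (1 - rho) g] with [g = f / (f + b)]; then [g' = b f' / (f + b)^2 <= 0]
    since [f] decreases, and [g'' = b (f'' (f + b) - 2 f'^2) / (f + b)^3 >= 0] by the first part,
    so [E'' = (1 - soff) (2 g' - (1 - rho) g'') <= 0] on [(0,1)]. *)

From Stdlib Require Import Reals Lra.
From Coquelicot Require Import Coquelicot.
Open Scope R_scope.

Section SecondDerivativeTest.

Variables (a b : R) (g g1 g2 : R -> R).
Hypothesis g_g1 : forall x, a < x < b -> is_derive g x (g1 x).
Hypothesis g1_g2 : forall x, a < x < b -> is_derive g1 x (g2 x).
Hypothesis g2_nonpos : forall x, a < x < b -> g2 x <= 0.

Lemma MVT_open_interval (h h1 : R -> R) u v :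
  (forall x, a < x < b -> is_derive h x (h1 x)) -> a < u -> u <= v -> v < b ->
  exists c, u <= c <= v /\ h v - h u = h1 c * (v - u).
Proof.
  intros h_h1 au uv vb.
  destruct (MVT_gen h u v h1) as [c [c_in hvu]];
    rewrite ?Rmin_left, ?Rmax_right in * by lra.
  - intros x x_in; apply h_h1; lra.
  - intros x x_in; apply continuity_pt_filterlim.
    apply (ex_derive_continuous (K := R_AbsRing) (V := R_NormedModule)).
    exists (h1 x); apply h_h1; lra.
  - exists c; auto.
Qed.

Lemma derive_antitone u v : a < u -> u <= v -> v < b -> g1 v <= g1 u.
Proof.
  intros au uv vb.
  destruct (MVT_open_interval g1 g2 u v g1_g2 au uv vb) as [c [c_in g1vu]].
  assert (g2 c <= 0) by (apply g2_nonpos; lra).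
  nra.
Qed.

Lemma concave_chord_lt x y t : a < x -> x < y -> y < b -> 0 <= t <= 1 ->
  t * g x + (1 - t) * g y <= g (t * x + (1 - t) * y).
Proof.
  intros ax xy yb t01.
  set (z := t * x + (1 - t) * y).
  assert (xz : x <= z) by (unfold z; nra).
  assert (zy : z <= y) by (unfold z; nra).
  destruct (MVT_open_interval g g1 x z g_g1) as [c1 [c1_in gzx]]; try lra.
  destruct (MVT_open_interval g g1 z y g_g1) as [c2 [c2_in gyz]]; try lra.
  assert (g1 c2 <= g1 c1) by (apply derive_antitone; lra).
  replace (z - x) with ((1 - t) * (y - x)) in gzx by (unfold z; ring).
  replace (y - z) with (t * (y - x)) in gyz by (unfold z; ring).
  assert (0 <= t * (1 - t) * (y - x)) by (apply Rmult_le_pos; nra).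
  nra.
Qed.

Lemma concave_on_open_of_derive2_nonpos : concave_on_open a b g.
Proof.
  intros x y t [ax xb] [ay yb] t01.
  destruct (Rtotal_order x y) as [xy | [<- | yx]].
  - now apply concave_chord_lt.
  - replace (t * x + (1 - t) * x) with x by ring; lra.
  - replace (t * x + (1 - t) * y) with ((1 - t) * y + (1 - (1 - t)) * x) by ring.
    replace (t * g x + (1 - t) * g y) with ((1 - t) * g y + (1 - (1 - t)) * g x) by ring.
    apply concave_chord_lt; lra.
Qed.

End SecondDerivativeTest.

Section RatioShift.

Variables (b : R) (f f1 f2 : R -> R).

Definition ratio_shift (x : R) : R := f x / (f x + b).
Definition ratio_shift_d1 (x : R) : R := b * f1 x / (f x + b) ^ 2.
Definition ratio_shift_d2 (x : R) : R :=
  b * (f2 x * (f x + b) - 2 * f1 x ^ 2) / (f x + b) ^ 3.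

Variable x : R.
Hypothesis f_b_neq0 : f x + b <> 0.
Hypothesis f_f1 : is_derive f x (f1 x).

Lemma is_derive_ratio_shift : is_derive ratio_shift x (ratio_shift_d1 x).
Proof.
  unfold ratio_shift, ratio_shift_d1.
  auto_derive; [repeat split; auto; now exists (f1 x) |].
  replace (Derive (fun y => f y) x) with (f1 x) by (symmetry; now apply is_derive_unique).
  field; auto.
Qed.

Lemma is_derive_ratio_shift_d1 :
  is_derive f1 x (f2 x) -> is_derive ratio_shift_d1 x (ratio_shift_d2 x).
Proof.
  intros f1_f2; unfold ratio_shift_d1, ratio_shift_d2.
  auto_derive; [repeat split; auto; (now exists (f1 x)) || (now exists (f2 x)) |].
  replace (Derive (fun y => f y) x) with (f1 x) by (symmetry; now apply is_derive_unique).
  replace (Derive (fun y => f1 y) x) with (f2 x) by (symmetry; now apply is_derive_unique).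
  field; auto.
Qed.

End RatioShift.

Lemma ratio_shift_d1_nonpos b f f1 x :
  0 <= b -> 0 < f x + b -> f1 x <= 0 -> ratio_shift_d1 b f f1 x <= 0.
Proof.
  intros b_ge0 fb_gt0 f1_le0; unfold ratio_shift_d1, Rdiv.
  assert (0 < / (f x + b) ^ 2) by (apply Rinv_0_lt_compat, pow_lt; lra).
  assert (b * f1 x <= 0) by nra.
  nra.
Qed.

Lemma ratio_shift_d2_nonneg b f f1 f2 x :
  0 <= b -> 0 < f x + b -> 2 * f1 x ^ 2 <= f2 x * (f x + b) ->
  0 <= ratio_shift_d2 b f f1 f2 x.
Proof.
  intros b_ge0 fb_gt0 second_order; unfold ratio_shift_d2, Rdiv.
  apply Rmult_le_pos; [apply Rmult_le_pos; lra |].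
  left; apply Rinv_0_lt_compat, pow_lt; lra.
Qed.

Lemma concave_on_open_complement_ratio_shift (c b : R) (f f1 f2 : R -> R) :
  0 <= c -> 0 <= b ->
  (forall x, 0 < x < 1 -> is_derive f x (f1 x)) ->
  (forall x, 0 < x < 1 -> is_derive f1 x (f2 x)) ->
  (forall x, 0 < x < 1 -> 0 < f x + b) ->
  (forall x, 0 < x < 1 -> f1 x <= 0) ->
  (forall x, 0 < x < 1 -> 2 * f1 x ^ 2 <= f2 x * (f x + b)) ->
  concave_on_open 0 1 (fun x => 1 - c * (1 - x) * ratio_shift b f x).
Proof.
  intros c_ge0 b_ge0 f_f1 f1_f2 fb_gt0 f1_le0 second_order.
  apply concave_on_open_of_derive2_nonpos with
    (g1 := fun x => c * ratio_shift b f x - c * (1 - x) * ratio_shift_d1 b f f1 x)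
    (g2 := fun x => 2 * c * ratio_shift_d1 b f f1 x
                    - c * (1 - x) * ratio_shift_d2 b f f1 f2 x).
  - intros x x01.
    assert (ratio' : is_derive (ratio_shift b f) x (ratio_shift_d1 b f f1 x))
      by (apply is_derive_ratio_shift; auto; specialize (fb_gt0 x x01); lra).
    auto_derive; [eexists; eassumption |].
    replace (Derive (fun y => ratio_shift b f y) x) with (ratio_shift_d1 b f f1 x)
      by (symmetry; now apply is_derive_unique).
    ring.
  - intros x x01.
    assert (fb_neq0 : f x + b <> 0) by (specialize (fb_gt0 x x01); lra).
    assert (ratio' : is_derive (ratio_shift b f) x (ratio_shift_d1 b f f1 x))
      by (apply is_derive_ratio_shift; auto).
    assert (ratio'' : is_derive (ratio_shift_d1 b f f1) x (ratio_shift_d2 b f f1 f2 x))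
      by (apply is_derive_ratio_shift_d1; auto).
    auto_derive; [repeat split; eexists; eassumption |].
    replace (Derive (fun y => ratio_shift b f y) x) with (ratio_shift_d1 b f f1 x)
      by (symmetry; now apply is_derive_unique).
    replace (Derive (fun y => ratio_shift_d1 b f f1 y) x) with (ratio_shift_d2 b f f1 f2 x)
      by (symmetry; now apply is_derive_unique).
    ring.
  - intros x x01.
    pose proof (ratio_shift_d1_nonpos b f f1 x b_ge0 (fb_gt0 x x01) (f1_le0 x x01)).
    pose proof (ratio_shift_d2_nonneg b f f1 f2 x b_ge0 (fb_gt0 x x01) (second_order x x01)).
    assert (0 <= c * (1 - x)) by nra.
    nra.
Qed.

Section SleepTime.

Variables mu Ts : R.
Hypothesis mu_gt0 : 0 < mu.

Definition eee_f_d1 (rho : R) : R :=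
  - exp (- mu * rho * Ts) * (mu * Ts * rho + 1) / (mu * rho ^ 2).
Definition eee_f_d2 (rho : R) : R :=
  exp (- mu * rho * Ts) * ((mu * Ts * rho) ^ 2 + 2 * (mu * Ts * rho) + 2) / (mu * rho ^ 3).

Variable rho : R.
Hypothesis rho_gt0 : 0 < rho.

Let mu_rho_gt0 : 0 < mu * rho.
Proof. now apply Rmult_lt_0_compat. Qed.

Lemma eee_f_gt0 : 0 < eee_f mu Ts rho.
Proof. apply Rdiv_lt_0_compat; [apply exp_pos | exact mu_rho_gt0]. Qed.

Lemma is_derive_eee_f : is_derive (eee_f mu Ts) rho (eee_f_d1 rho).
Proof.
  unfold eee_f, eee_f_d1.
  auto_derive; [lra |].
  field; split; lra.
Qed.

Lemma is_derive_eee_f_d1 : is_derive eee_f_d1 rho (eee_f_d2 rho).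
Proof.
  unfold eee_f_d1, eee_f_d2.
  auto_derive; [nra |].
  field; split; lra.
Qed.

Lemma eee_f_d1_neg : 0 < Ts -> eee_f_d1 rho < 0.
Proof.
  intros Ts_gt0; unfold eee_f_d1, Rdiv.
  assert (0 < exp (- mu * rho * Ts)) by apply exp_pos.
  assert (0 < mu * Ts * rho + 1) by (assert (0 < mu * rho * Ts) by nra; nra).
  assert (0 < / (mu * rho ^ 2)) by (apply Rinv_0_lt_compat; nra).
  assert (0 < exp (- mu * rho * Ts) * (mu * Ts * rho + 1) * / (mu * rho ^ 2))
    by (repeat apply Rmult_lt_0_compat; assumption).
  lra.
Qed.

Lemma eee_f_second_order_bound b : 0 < Ts -> Ts <= b ->
  2 * eee_f_d1 rho ^ 2 <= eee_f_d2 rho * (eee_f mu Ts rho + b).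
Proof.
  intros Ts_gt0 Ts_le_b; unfold eee_f, eee_f_d1, eee_f_d2.
  set (E := exp (- mu * rho * Ts)); set (a := mu * Ts * rho).
  assert (E_gt0 : 0 < E) by apply exp_pos.
  assert (E_le1 : E <= 1).
  { unfold E; rewrite <- exp_0; left; apply exp_increasing; nra. }
  assert (a_gt0 : 0 < a) by (unfold a; nra).
  assert (a_le : a <= b * mu * rho) by (unfold a; nra).
  assert (gap : E * (b * mu * rho * (a ^ 2 + 2 * a + 2) - E * a * (a + 2)) / (mu ^ 2 * rho ^ 4)
                = E * (a ^ 2 + 2 * a + 2) / (mu * rho ^ 3) * (E / (mu * rho) + b)
                  - 2 * (- E * (a + 1) / (mu * rho ^ 2)) ^ 2)
    by (unfold a; field; split; lra).
  enough (0 <= E * (b * mu * rho * (a ^ 2 + 2 * a + 2) - E * a * (a + 2))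
               / (mu ^ 2 * rho ^ 4)) by lra.
  apply Rdiv_le_0_compat; [| apply Rmult_lt_0_compat; apply pow_lt; lra].
  apply Rmult_le_pos; [lra |].
  assert (a * (a + 2) <= b * mu * rho * (a ^ 2 + 2 * a + 2)) by nra.
  assert (E * (a * (a + 2)) <= a * (a + 2)) by nra.
  nra.
Qed.

End SleepTime.

Lemma Derive_eee_f mu Ts rho : 0 < mu -> 0 < rho ->
  Derive (eee_f mu Ts) rho = eee_f_d1 mu Ts rho.
Proof. intros; now apply is_derive_unique, is_derive_eee_f. Qed.

Lemma Derive_Derive_eee_f mu Ts rho : 0 < mu -> 0 < rho ->
  Derive (Derive (eee_f mu Ts)) rho = eee_f_d2 mu Ts rho.
Proof.
  intros mu_gt0 rho_gt0; apply is_derive_unique.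
  apply (is_derive_ext_loc (eee_f_d1 mu Ts)); [| now apply is_derive_eee_f_d1].
  apply (filter_imp (fun y => 0 < y)); [| exact (open_gt 0 rho rho_gt0)].
  intros y y_gt0; symmetry; now apply Derive_eee_f.
Qed.

Lemma eee_E_ratio_shift mu Ts Tw soff rho :
  eee_E mu Ts Tw soff rho
  = 1 - (1 - soff) * (1 - rho) * ratio_shift (Ts + Tw) (eee_f mu Ts) rho.
Proof. unfold eee_E, ratio_shift; now rewrite Rplus_assoc. Qed.

Theorem mainTheorem3 (mu Ts Tw soff : R) :
  0 < mu -> 0 < Ts -> 0 < Tw -> 0 <= soff < 1 ->
  (forall rho, 0 < rho < 1 ->
     Derive (Derive (eee_f mu Ts)) rho * (eee_f mu Ts rho + (Ts + Tw))
       >= 2 * (Derive (eee_f mu Ts) rho) ^ 2)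
  /\ concave_on_open 0 1 (eee_E mu Ts Tw soff).
Proof.
  intros mu_gt0 Ts_gt0 Tw_gt0 soff_01.
  assert (second_order : forall rho, 0 < rho < 1 ->
    2 * eee_f_d1 mu Ts rho ^ 2 <= eee_f_d2 mu Ts rho * (eee_f mu Ts rho + (Ts + Tw)))
    by (intros rho rho_01; apply eee_f_second_order_bound; lra).
  split.
  - intros rho rho_01.
    rewrite Derive_Derive_eee_f, Derive_eee_f by lra.
    apply Rle_ge, second_order, rho_01.
  - intros x y t x_01 y_01 t_01; rewrite !eee_E_ratio_shift.
    apply (concave_on_open_complement_ratio_shift (1 - soff) (Ts + Tw)
             (eee_f mu Ts) (eee_f_d1 mu Ts) (eee_f_d2 mu Ts)); try lra.
    + intros rho rho_01; apply is_derive_eee_f; lra.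
    + intros rho rho_01; apply is_derive_eee_f_d1; lra.
    + intros rho rho_01; pose proof (eee_f_gt0 mu Ts mu_gt0 rho (proj1 rho_01)); lra.
    + intros rho rho_01; apply Rlt_le, eee_f_d1_neg; lra.
    + exact second_order.
Qed.
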